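(* Let $k$ be a field and $Q,q\in k^\times$ with $f_d(Q,q)=\prod_{i=1-d}^{d-1}(Q^{-2}+q^{2i})\neq0$. For each sign $\pm$, the square formed by the quotient maps $\otimes^d\to S^d$, $\otimes^d\to\otimes^d_\pm$, $\otimes^d_\pm\to S^d_\pm$ and the induced map $p_\pm:S^d\to S^d_\pm$ is a pushout; likewise the square with $\wedge^d$ and $\wedge^d_\pm$ in place of $S^d$ and $S^d_\pm$ is a pushout.
   Context: $\mathcal H^B_{Q,q}(d)$ is generated by $T_0,\dots,T_{d-1}$ with relations $(T_0+Q)(T_0-Q^{-1})=0$; $(T_i+q)(T_i-q^{-1})=0$ ($i>0$); $T_iT_{i+1}T_i=T_{i+1}T_iT_{i+1}$ ($i>0$); $T_0T_1T_0T_1=T_1T_0T_1T_0$; $T_iT_j=T_jT_i$ ($|i-j|>1$); $K_i=T_{i-1}\cdots T_1T_0T_1\cdots T_{i-1}$. $V_n$ has basis $v_i$, $i\in\mathbb I_n$ ($\mathbb I_{2s}=\{-\tfrac{2s-1}{2},\dots,\tfrac{2s-1}{2}\}$ half-integers, $\mathbb I_{2s+1}=\{-s,\dots,s\}$); the right action on $V_n^{\otimes d}$: $T_i$ ($i>0$) on factors $i,i+1$ by $R_q$: $v_i\otimes v_j\mapsto q^{-1}v_i\otimes v_j$ ($i=j$), $v_j\otimes v_i$ ($i<j$), $v_j\otimes v_i+(q^{-1}-q)v_i\otimes v_j$ ($i>j$); $T_0$ on the first factor by $K_Q$: $v_i\mapsto Q^{-1}v_i$ ($i=0$), $v_{-i}$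 ($i>0$), $v_{-i}+(Q^{-1}-Q)v_i$ ($i<0$). All functors are evaluated at $V_n$ and are functorial for $\mathrm{Hom}_{\mathcal H^B_{Q,q}(d)}(V_n^{\otimes d},V_m^{\otimes d})$. $\otimes^d(V_n)=V_n^{\otimes d}$; $S^dV_n=V_n^{\otimes d}/\mathrm{span}\{(T_i-q^{-1})w: i>0\}$; $\wedge^dV_n=V_n^{\otimes d}/\mathrm{span}\{(T_i+q)w:i>0\}$; $S^d_+V_n=V_n^{\otimes d}/\mathrm{span}\{(T_0-Q^{-1})w,(T_i-q^{-1})w\}$; $S^d_-V_n=V_n^{\otimes d}/\mathrm{span}\{(T_0+Q)w,(T_i-q^{-1})w\}$; $\wedge^d_+V_n=V_n^{\otimes d}/\mathrm{span}\{(T_0-Q^{-1})w,(T_i+q)w\}$; $\wedge^d_-V_n=V_n^{\otimes d}/\mathrm{span}\{(T_0+Q)w,(T_i+q)w\}$ ($w\in V_n^{\otimes d}$, $i>0$). Eigenvalues of $K_i$ are of the form $Q^{-1}q^{2j}$ (''positive'') or $-Qq^{2j}$ (''negative''), disjoint when $f_d(Q,q)\ne0$; $\otimes^d_+$ is the largest quotient of $\otimes^d$ on which each $K_i$ has only positive eigenvalues and $\otimes^d_-$ the direct summand on which each $K_i$ has only negative eigenvalues, viewed as a quotient of $\otimes^d$ via the projection. *)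

From HB Require Import structures.
From mathcomp Require Import all_boot all_order all_algebra.
Set Implicit Arguments.
Unset Strict Implicit.
Unset Printing Implicit Defensive.
Import GRing.Theory.
Local Open Scope ring_scope.

(* Conventions.
   - The basis index set I_n of V_n is modelled by 'I_n: the ordinal a
     stands for the label a - (n-1)/2.  Hence order is preserved, the label
     is 0 iff 2a = n-1, positive iff 2a > n-1, and negation of labels is
     rev_ord.
   - The basis of V_n^{(x)d} is indexed by tbasis n d = {ffun 'I_d -> 'I_n}
     (position j : 'I_d is the (j+1)-st tensor factor); vectors of
     V_n^{(x)d} are row vectors 'rV[k]_#|tbasis n d| (coordinates indexed via
     enum_val/enum_rank), and the RIGHT action of h is w |-> w *m (matrix of h).
     Row x of the matrix of T_i is the image of the basis vector x.
   - Generator T_i (0 <= i < d) is indexed by i : 'I_d.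
   - Subspaces of V_n^{(x)d} are row spaces of matrices (mxalgebra, %MS). *)

Section Defs.
Variables (k : fieldType) (Q q : k) (n d : nat).

Definition tbasis := {ffun 'I_d -> 'I_n}.

Definition prev_ord (i : 'I_d) : 'I_d :=
  Ordinal (leq_ltn_trans (leq_pred i) (ltn_ord i)).

Definition Tcoef (i : 'I_d) (x y : tbasis) : k :=
  if val i == 0%N then
    (* K_Q on the first tensor factor *)
    let a := x i in
    let fl : tbasis := [ffun j => if j == i then rev_ord a else x j] in
    if a.*2 == n.-1 then Q^-1 *+ (y == x)
    else if (n.-1 < a.*2)%N then (y == fl)%:R
    else (y == fl)%:R + (Q^-1 - Q) *+ (y == x)
  else
    (* R_q on tensor factors i, i+1 (1-based), i.e. positions i-1, i *)
    let p := prev_ord i in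
    let a := x p in
    let b := x i in
    let sw : tbasis := [ffun j => if j == p then b else if j == i then a else x j] in
    if a == b then q^-1 *+ (y == x)
    else (y == sw)%:R + (if (b < a)%N then (q^-1 - q) *+ (y == x) else 0).

Definition Tmat (i : 'I_d) : 'M[k]_#|tbasis| :=
  \matrix_(r, c) Tcoef i (enum_val r) (enum_val c).

Definition Tn (m : nat) : 'M[k]_#|tbasis| :=
  if insub m is Some i then Tmat i else 1%:M.

(* Kn m is the matrix of K_{m+1} = T_m ... T_1 T_0 T_1 ... T_m *)
Fixpoint Kn (m : nat) : 'M[k]_#|tbasis| :=
  match m with
  | 0 => Tn 0
  | m'.+1 => Tn m *m Kn m' *m Tn m
  end.

(* "positive" (b = true) eigenvalues Q^{-1} q^{2j} and "negative"
   (b = false) eigenvalues -Q q^{2j}, with |j| <= d-1 *)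
Definition sgn_ev (b : bool) (l : k) : Prop :=
  exists2 j : int, (absz j < d)%N &
    l = (if b then Q^-1 * q ^ (j *+ 2) else - (Q * q ^ (j *+ 2))).

Definition fd : k :=
  \prod_(t < (d.*2).-1) (Q ^- 2 + q ^ ((t%:Z - (d.-1)%:Z) *+ 2)).

(* l is an eigenvalue of the endomorphism induced by K on the quotient
   V / rowspace(U) (U assumed K-stable) *)
Definition qeig (K U : 'M[k]_#|tbasis|) (l : k) : Prop :=
  exists w : 'rV[k]_#|tbasis|, ~~ (w <= U)%MS /\ (w *m (K - l%:M) <= U)%MS.

(* V/U is a quotient on which every K_i (1 <= i <= d) acts and has only
   eigenvalues of sign b *)
Definition sign_quotient (b : bool) (U : 'M[k]_#|tbasis|) : Prop :=
  forall m, (m < d)%N ->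
    (U *m Kn m <= U)%MS /\ (forall l, qeig (Kn m) U l -> sgn_ev b l).

(* U is the kernel of V_n^{(x)d} ->> (x)^d_{+/-} V_n : the largest such
   quotient, i.e. the smallest such U *)
Definition sign_kernel (b : bool) (U : 'M[k]_#|tbasis|) : Prop :=
  sign_quotient b U /\ forall U', sign_quotient b U' -> (U <= U')%MS.

Definition sym_rel : 'M[k]_#|tbasis| :=
  (\sum_(i : 'I_d | val i != 0%N) (Tmat i - q^-1%:M))%MS.
Definition wedge_rel : 'M[k]_#|tbasis| :=
  (\sum_(i : 'I_d | val i != 0%N) (Tmat i + q%:M))%MS.
Definition T0_rel (b : bool) : 'M[k]_#|tbasis| :=
  (\sum_(i : 'I_d | val i == 0%N) (Tmat i - (if b then Q^-1 else - Q)%:M))%MS.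
Definition sym_sign (b : bool) : 'M[k]_#|tbasis| := (sym_rel + T0_rel b)%MS.
Definition wedge_sign (b : bool) : 'M[k]_#|tbasis| := (wedge_rel + T0_rel b)%MS.

End Defs.

(* Pushout of a square of quotient maps  A ->> A/X,  A ->> A/Y,
   A/X ->> A/Z,  A/Y ->> A/Z  (A = 'rV_N, X Y Z subspaces).
   The square exists (the induced maps are defined) iff X, Y <= Z; it is a
   pushout iff for every vector space E = 'rV_m and every pair of linear maps
   A/X -> E, A/Y -> E agreeing on A -- i.e. a single linear map f : A -> E
   killing X and Y -- there is a (necessarily unique, since A ->> A/Z is
   onto) map A/Z -> E through which it factors, i.e. f kills Z. *)
Definition quot_pushout (k : fieldType) (N : nat) (X Y Z : 'M[k]_N) : Prop :=
  [/\ (X <= Z)%MS, (Y <= Z)%MS &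
      forall m (f : 'M[k]_(N, m)), X *m f = 0 -> Y *m f = 0 -> Z *m f = 0].

Arguments Tmat {k} Q q n d i.
Arguments Kn {k} Q q n d m.
Arguments qeig {k n d} K U l.
Arguments sign_quotient {k} Q q n d b U.
Arguments sign_kernel {k} Q q n d b U.
Arguments sym_rel {k} Q q n d.
Arguments wedge_rel {k} Q q n d.
Arguments T0_rel {k} Q q n d b.
Arguments sym_sign {k} Q q n d b.
Arguments wedge_sign {k} Q q n d b.

(* On the quotient of V_n^{(x)d} by [R + T0_rel b], with [R] the symmetric or
   exterior relations, every generator T_i acts by a scalar (c for i > 0, the
   root of sign b of the quadratic relation for T_0), so K_{m+1} acts by the
   scalar T0_root b * c^(2m), which has sign b; by minimality the sign kernel U
   lies in [R + T0_rel b].  Conversely T_0 is annihilated by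
   (X - Q^-1)(X + Q), and since f_d(Q,q) != 0 the root of the opposite sign is
   not an eigenvalue of K_1 = T_0 on V/U, so T_0 acts on V/U by the root of
   sign b, i.e. [T0_rel b <= U].  Hence R + U = R + T0_rel b, which is the
   pushout property of the square of quotients. *)

From HB Require Import structures.
From mathcomp Require Import all_boot all_order all_algebra.
From mathcomp Require Import zify ring.
From Stdlib Require Import Classical.
Set Implicit Arguments.
Unset Strict Implicit.
Unset Printing Implicit Defensive.
Import GRing.Theory.
Local Open Scope ring_scope.

Lemma ex_minmx (K : fieldType) (N : nat) (P : 'M[K]_N -> Prop) :
  P 1%:M -> (forall U V, P U -> P V -> P (U :&: V)%MS) ->
  exists U, P U /\ forall V, P V -> (U <= V)%MS.
Proof.
move=> P1 PI.
suff minP r U : (\rank U < r)%N -> P U ->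
    exists U0, P U0 /\ forall V, P V -> (U0 <= V)%MS.
  by apply: (minP N.+1 1%:M); rewrite ?ltnS ?rank_leq_col.
elim: r U => [// | r IH] U ltUr PU.
case: (classic (forall V, P V -> (U <= V)%MS)) => [Umin | /not_all_ex_not[V]].
  by exists U.
move=> /(imply_to_and (P V)) [PV notUV].
apply: (IH (U :&: V)%MS); last exact: PI.
have ltUVU : ((U :&: V)%MS < U)%MS.
  by rewrite ltmxE capmxSl sub_capmx submx_refl; exact/negP.
exact: leq_trans (rank_ltmx ltUVU) ltUr.
Qed.

Lemma quot_pushout_adds (K : fieldType) (N : nat) (X Y U : 'M[K]_N) :
  (Y <= U)%MS -> (U <= X + Y)%MS -> quot_pushout X U (X + Y)%MS.
Proof.
move=> sYU sUXY; split=> [||m f Xf0 Uf0]; [exact: addsmxSl | exact: sUXY |].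
apply/sub_kermxP; rewrite addsmx_sub (introT sub_kermxP Xf0) /=.
exact: submx_trans sYU (introT sub_kermxP Uf0).
Qed.

Section ScalarModulo.
Variables (K : fieldType) (N : nat) (Z : 'M[K]_N).

Lemma stablemx_scalar_mod (A : 'M_N) a : (A - a%:M <= Z)%MS -> (Z *m A <= Z)%MS.
Proof.
move=> sAZ; have -> : Z *m A = Z *m (A - a%:M) + a *: Z.
  by rewrite mulmxBr mul_mx_scalar subrK.
by rewrite addmx_sub ?scalemx_sub // (submx_trans (submxMl _ _) sAZ).
Qed.

Lemma mulmx_scalar_mod (A B : 'M_N) a b :
  (A - a%:M <= Z)%MS -> (B - b%:M <= Z)%MS -> (A *m B - (a * b)%:M <= Z)%MS.
Proof.
move=> sAZ sBZ.
have -> : A *m B - (a * b)%:M = (A - a%:M) *m B + a *: (B - b%:M).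
  by rewrite mulmxBl mul_scalar_mx scalerBr scale_scalar_mx addrA subrK.
rewrite addmx_sub ?scalemx_sub //.
exact: submx_trans (submxMr _ sAZ) (stablemx_scalar_mod sBZ).
Qed.

End ScalarModulo.

Section QuotientEigenvalues.
Variables (k : fieldType) (Q q : k) (n d : nat).
Local Notation N := #|tbasis n d|.

Lemma qeig_capmx (K U V : 'M[k]_N) l : qeig K (U :&: V)%MS l -> qeig K U l \/ qeig K V l.
Proof.
case=> w []; rewrite sub_capmx negb_and => /orP[nwU | nwV] /[dup] wKUV.
  by left; exists w; split=> //; exact: submx_trans wKUV (capmxSl _ _).
by right; exists w; split=> //; exact: submx_trans wKUV (capmxSr _ _).
Qed.

Lemma qeig_scalar_mod (K Z : 'M[k]_N) c l : (K - c%:M <= Z)%MS -> qeig K Z l -> l = c.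
Proof.
move=> sKZ [w [nwZ wKlZ]]; apply/eqP; apply: contraNT nwZ => nlc.
have eKlc : K - l%:M - (K - c%:M) = (c - l)%:M.
  by rewrite opprB [_ + (c%:M - _)]addrC addrA subrK raddfB.
have -> : w = (c - l)^-1 *: (w *m (K - l%:M) - w *m (K - c%:M)).
  rewrite -mulmxBr eKlc mul_mx_scalar scalerA.
  by rewrite mulVf ?scale1r // subr_eq0 eq_sym.
by rewrite scalemx_sub // addmx_sub // eqmx_opp (submx_trans (submxMl _ _) sKZ).
Qed.

Lemma sub_of_root_mx (A U : 'M[k]_N) a e :
  (A - a%:M) *m (A - e%:M) = 0 -> ~ qeig A U e -> (A - a%:M <= U)%MS.
Proof.
move=> Ae0 noeig; apply/row_subP => r; apply/negPn/negP => nrU; apply: noeig.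
by exists (row r (A - a%:M)); rewrite -row_mul Ae0 row0 sub0mx; split.
Qed.

Lemma sign_quotient1 b : sign_quotient Q q n d b 1%:M.
Proof. by move=> m _; split=> [|l [w []]]; [exact: submx1 | rewrite submx1]. Qed.

Lemma sign_quotient_capmx b U V :
  sign_quotient Q q n d b U -> sign_quotient Q q n d b V ->
  sign_quotient Q q n d b (U :&: V)%MS.
Proof.
move=> sqU sqV m lt_md; have [sKU evU] := sqU m lt_md; have [sKV evV] := sqV m lt_md.
split=> [|l /qeig_capmx[]]; [|exact: evU | exact: evV].
rewrite sub_capmx (submx_trans (submxMr _ (capmxSl _ _)) sKU).
exact: submx_trans (submxMr _ (capmxSr _ _)) sKV.
Qed.

Lemma sign_kernel_exists b : exists U, sign_kernel Q q n d b U.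
Proof. exact: ex_minmx (@sign_quotient1 b) (@sign_quotient_capmx b). Qed.

End QuotientEigenvalues.

Section FirstGenerator.
Variables (k : fieldType) (Q q : k) (n d : nat) (i : 'I_d).
Hypothesis i0 : val i = 0%N.

Definition flip0 (x : tbasis n d) : tbasis n d :=
  [ffun j => if j == i then rev_ord (x i) else x j].

Definition T0_diag (x : tbasis n d) : k :=
  if (x i).*2 == n.-1 then Q^-1 else if (n.-1 < (x i).*2)%N then 0 else Q^-1 - Q.

Definition T0_flip (x : tbasis n d) : k := if (x i).*2 == n.-1 then 0 else 1.

Lemma Tcoef0E x y :
  Tcoef Q q i x y = T0_diag x * (y == x)%:R + T0_flip x * (y == flip0 x)%:R.
Proof.
rewrite /Tcoef i0 eqxx /T0_diag /T0_flip -/(flip0 x).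
case: eqP => _; first by rewrite mul0r addr0 mulr_natr.
by case: ltnP => _; rewrite mul1r ?mul0r ?add0r // addrC mulr_natr.
Qed.

Lemma flip0_at x : flip0 x i = rev_ord (x i).
Proof. by rewrite ffunE eqxx. Qed.

Lemma flip0K : involutive flip0.
Proof.
move=> x; apply/ffunP => j; rewrite !ffunE.
by case: eqP => [->|//]; rewrite eqxx rev_ordK.
Qed.

Lemma Tmat0_sqr : Q != 0 ->
  Tmat Q q n d i *m Tmat Q q n d i = (Q^-1 - Q) *: Tmat Q q n d i + 1%:M.
Proof.
move=> Q_neq0.
have sum_delta (G : tbasis n d -> k) a : \sum_y (y == a)%:R * G y = G a.
  by rewrite (bigD1 a) //= eqxx mul1r big1 ?addr0 // => y /negbTE ->; rewrite mul0r.
apply/matrixP => r c; rewrite !mxE -(inj_eq enum_val_inj) eq_sym.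
under eq_bigr do rewrite !mxE.
have sum_enum (F : tbasis n d -> k) :
    \sum_(z < #|tbasis n d|) F (enum_val z) = \sum_z F z.
  by rewrite (big_enum_val F).
rewrite (sum_enum (fun z => Tcoef Q q i (enum_val r) z * Tcoef Q q i z (enum_val c))).
set x := enum_val r; set y := enum_val c.
under eq_bigr do rewrite Tcoef0E mulrDl -!mulrA.
rewrite big_split /= -!mulr_sumr !sum_delta !Tcoef0E flip0K /T0_diag /T0_flip flip0_at /=.
have lt_xn : (x i < n)%N := ltn_ord (x i).
case: (ltngtP (x i).*2 n.-1) => cmp.
- have [-> ->] : ((n - (x i).+1).*2 == n.-1) = false /\ (n.-1 < (n - (x i).+1).*2)%N.
    by split; [apply/eqP|]; rewrite -!muln2 in cmp *; lia.
  by ring.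
- have [-> ->] : ((n - (x i).+1).*2 == n.-1) = false /\
                 (n.-1 < (n - (x i).+1).*2)%N = false.
    by split; [apply/eqP | apply/negbTE]; rewrite -!muln2 in cmp *; lia.
  by ring.
- by rewrite !(mul0r, addr0); field.
Qed.

End FirstGenerator.

Definition T0_root (k : fieldType) (Q : k) (b : bool) : k := if b then Q^-1 else - Q.

Lemma Tmat0_root_factor (k : fieldType) (Q q : k) (n d : nat) (i : 'I_d) b :
  val i = 0%N -> Q != 0 ->
  (Tmat Q q n d i - (T0_root Q b)%:M) *m (Tmat Q q n d i - (T0_root Q (~~ b))%:M) = 0.
Proof.
move=> i0 Q_neq0.
have [sum_ae prod_ae] : Q^-1 - Q = T0_root Q b + T0_root Q (~~ b) /\
                        T0_root Q b * T0_root Q (~~ b) = -1.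
  by rewrite /T0_root; case: b; rewrite /= ?mulrN ?mulNr ?mulVf ?mulfV // addrC.
rewrite mulmxBl !mulmxBr Tmat0_sqr // mul_mx_scalar !mul_scalar_mx.
rewrite scale_scalar_mx prod_ae.
by rewrite sum_ae scalerDl [_ + 1%:M - _]addrAC addrK raddfN /= opprK subrr.
Qed.

Section SignSeparation.
Variables (k : fieldType) (Q q : k) (d : nat).
Hypotheses (Q_neq0 : Q != 0) (fd_neq0 : fd Q q d != 0).

Lemma fd_factor_neq0 (j : int) : (absz j < d)%N -> Q ^- 2 + q ^ (j *+ 2) != 0.
Proof.
move=> lt_jd; have lt_t : (absz (j + (d.-1)%:Z)%R < (d.*2).-1)%N by rewrite -muln2; lia.
apply: contra fd_neq0 => /eqP factor0.
have t_j : (absz (j + (d.-1)%:Z))%:Z - (d.-1)%:Z = j by lia.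
by rewrite /fd (bigD1 (Ordinal lt_t)) //= t_j factor0 mul0r.
Qed.

Lemma sgn_ev_T0_root_opp b : ~ sgn_ev Q q d b (T0_root Q (~~ b)).
Proof.
case: b => -[j lt_jd] /= root_eq.
- have q2j : q ^ (j *+ 2) = - Q ^+ 2.
    by apply: (mulfI (invr_neq0 Q_neq0)); rewrite -root_eq; field.
  have := fd_factor_neq0 (j := - j); rewrite abszN => /(_ lt_jd).
  by rewrite mulNrn -invr_expz q2j invrN subrr eqxx.
- have q2j : q ^ (j *+ 2) = - Q ^- 2.
    by apply: (mulfI Q_neq0); rewrite -[Q * _]opprK -root_eq; field.
  by have := fd_factor_neq0 lt_jd; rewrite q2j subrr eqxx.
Qed.

End SignSeparation.

Lemma Tn_val (k : fieldType) (Q q : k) (n d : nat) (i : 'I_d) :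
  Tn Q q n d i = Tmat Q q n d i.
Proof. by rewrite /Tn valK. Qed.

Section ScalarQuotient.
Variables (k : fieldType) (Q q : k) (n d : nat) (b : bool).
Variables (Z : 'M[k]_#|tbasis n d|) (c : k).
Hypotheses (T0_Z : (T0_rel Q q n d b <= Z)%MS)
           (Ti_Z : forall i : 'I_d, val i != 0%N -> (Tmat Q q n d i - c%:M <= Z)%MS).

Lemma Tn_scalar_mod j : (j < d)%N ->
  (Tn Q q n d j - (if j == 0%N then T0_root Q b else c)%:M <= Z)%MS.
Proof.
move=> lt_jd; rewrite (Tn_val Q q n (Ordinal lt_jd)).
case: eqP => [j0 | /eqP j_neq0]; last exact: Ti_Z.
apply: submx_trans T0_Z; apply: (sumsmx_sup (Ordinal lt_jd)) => //=; exact/eqP.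
Qed.

Lemma Kn_scalar_mod m : (m < d)%N ->
  (Kn Q q n d m - (T0_root Q b * c ^+ m.*2)%:M <= Z)%MS.
Proof.
elim: m => [|m IH] lt_md; first by rewrite mulr1; exact: (Tn_scalar_mod lt_md).
have scalar_eq : T0_root Q b * c ^+ m.+1.*2 = c * (T0_root Q b * c ^+ m.*2) * c.
  by rewrite doubleS !exprS; ring.
rewrite scalar_eq /=; apply: mulmx_scalar_mod; first apply: mulmx_scalar_mod.
- exact: (Tn_scalar_mod lt_md).
- exact: IH (ltnW lt_md).
- exact: (Tn_scalar_mod lt_md).
Qed.

Lemma sign_quotient_scalar_mod (e : int) :
  (absz e <= 1)%N -> c ^+ 2 = q ^ (e *+ 2) -> sign_quotient Q q n d b Z.
Proof.
move=> le_e1 c2 m lt_md; have KZ := Kn_scalar_mod lt_md.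
split=> [|l /(qeig_scalar_mod KZ) ->]; first exact: stablemx_scalar_mod KZ.
exists (m%:Z * e).
  by rewrite abszM /= (leq_ltn_trans _ lt_md) // -[leqRHS]muln1 leq_mul.
have -> : c ^+ m.*2 = q ^ ((m%:Z * e) *+ 2).
  by rewrite -muln2 mulnC exprM c2 exprnP exprz_exp; congr (_ ^ _); lia.
by rewrite /T0_root; case: b; rewrite ?mulNr.
Qed.

End ScalarQuotient.

Section Pushout.
Variables (k : fieldType) (Q q : k) (n d : nat) (b : bool).
Hypotheses (Q_neq0 : Q != 0) (fd_neq0 : fd Q q d != 0).

Lemma T0_rel_sub_sign_quotient U :
  sign_quotient Q q n d b U -> (T0_rel Q q n d b <= U)%MS.
Proof.
move=> sqU; apply/sumsmx_subP => i /eqP i0.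
have [_ evU] := sqU 0%N (leq_ltn_trans (leq0n _) (ltn_ord i)).
apply: (sub_of_root_mx (Tmat0_root_factor q n b i0 Q_neq0)) => eigU.
apply: (sgn_ev_T0_root_opp Q_neq0 fd_neq0 (b := b)); apply: evU.
by rewrite /= -i0 Tn_val.
Qed.

Lemma sign_kernel_pushout (R U : 'M[k]_#|tbasis n d|) (c : k) (e : int) :
  (forall i : 'I_d, val i != 0%N -> (Tmat Q q n d i - c%:M <= R)%MS) ->
  (absz e <= 1)%N -> c ^+ 2 = q ^ (e *+ 2) ->
  sign_kernel Q q n d b U -> quot_pushout R U (R + T0_rel Q q n d b)%MS.
Proof.
move=> Ti_R le_e1 c2 [sqU Umin].
apply: quot_pushout_adds; first exact: T0_rel_sub_sign_quotient.
apply/Umin/(sign_quotient_scalar_mod _ _ le_e1 c2); first exact: addsmxSr.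
by move=> i /Ti_R /submx_trans; apply; apply: addsmxSl.
Qed.

End Pushout.

Theorem proposition7p8 (k : fieldType) (Q q : k) (d : nat) :
  Q != 0 -> q != 0 -> fd Q q d != 0 ->
  forall (n : nat) (b : bool),
    (exists U, sign_kernel Q q n d b U) /\
    forall U : 'M[k]_#|tbasis n d|, sign_kernel Q q n d b U ->
      quot_pushout (sym_rel Q q n d) U (sym_sign Q q n d b) /\
      quot_pushout (wedge_rel Q q n d) U (wedge_sign Q q n d b).
Proof.
move=> Q_neq0 _ fd_neq0 n b; split=> [|U kerU]; first exact: sign_kernel_exists.
split.
- apply: (sign_kernel_pushout Q_neq0 fd_neq0 (c := q^-1) (e := -1)) => //.
    by move=> i i_neq0; apply: (sumsmx_sup i).
  by rewrite exprnP exprz_inv mulNrn.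
- apply: (sign_kernel_pushout Q_neq0 fd_neq0 (c := - q) (e := 1)) => //.
    move=> i i_neq0; rewrite raddfN /= opprK.
    (* the summand of [wedge_rel] is parsed in %MS scope, as a sum of row spaces *)
    apply: submx_trans (addmx_sub_adds (submx_refl _) (submx_refl _)) _.
    by apply: (sumsmx_sup i).
  by rewrite sqrrN exprnP.
Qed.
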